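(* Assume $f$ is in Case 4 and $(n_1,m_1)\neq(0,\delta)$. Then, for every sufficiently small $r>0$, $A_f^{l,+}=A_0\setminus E_z$ for every $0<l<\alpha$.
   Context: Let $f(z,w)=(p(z),q(z,w))$ be a holomorphic skew product defined on $\mathbb{C}^2$ or on $\{|z|<R\}\times\mathbb{C}$, where $R$ is so large that the attracting basin of $p$ at $0$ is relatively compact in $\{|z|<R\}$. Assume $p(z)=az^{\delta}+O(z^{\delta+1})$, $a\neq0$, $\delta\ge2$, and $q(z,w)=\sum_{i,j\ge0}b_{ij}z^iw^j$ with $b_{00}=b_{01}=0$. The Newton polygon $N(q)$ is the convex hull of $\bigcup_{b_{ij}\ne0}\{(x,y):x\ge i,\ y\ge j\}$, with vertices $(n_1,m_1),\dots,(n_s,m_s)$, $n_1<\dots<n_s$, $m_1>\dots>m_s$. For $1\le k\le s-1$, $T_k$ is the $y$-intercept of the line through $(n_k,m_k)$ and $(n_{k+1},m_{k+1})$. Case 4 means $s>2$ and $T_k\le\delta\le T_{k-1}$ for some $2\le k\le s-1$; set $(\gamma,d)=(n_k,m_k)$ and $\alpha=\gamma/(\delta-d)$. For $l>0$, $U^{l,+}=\{|z|<r,\ |w|<r|z|^l\}$ and $A_f^{l,+}=\bigcup_{n\ge0}f^{-n}(U^{l,+})$. $A_0$ is the attracting basin of the origin for $f$ and $E_z=\bigcup_{n\ge0}f^{-n}(\{z=0\})$. *)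

From HB Require Import structures.
From mathcomp Require Import all_boot all_order all_algebra.
From mathcomp Require Import all_classical all_reals all_analysis.
From mathcomp Require Import complex.
Set Implicit Arguments.
Unset Strict Implicit.
Unset Printing Implicit Defensive.
Import Order.TTheory GRing.Theory Num.Theory.
Import numFieldNormedType.Exports.
Local Open Scope ring_scope.
Local Open Scope classical_set_scope.

Definition cpx (R : realType) : numFieldType := R[i].

Section SkewProduct.
Variable R : realType.
Local Notation C := (cpx R).

Definition cabs (z : C) : R := ComplexField.Normc.normc (z : R[i]).

(* {|z| < Rad} ; Rad = None encodes Rad = +oo, i.e. the whole plane
   (the case where f is defined on C^2). *)
Definition disk (Rad : option R) : set C :=
  match Rad with
  | None => setT
  | Some R0 => [set z | cabs z < R0]
  end.

(* holomorphy = complex (Frechet) differentiability *)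
Definition holo1 (D : set C) (p : C -> C) :=
  forall z, D z -> differentiable p z.
Definition holo2 (D : set (C * C)) (q : C -> C -> C) :=
  forall x, D x -> differentiable (fun y : C * C => q y.1 y.2) x.

(* q(z,w) = sum_{i,j} b_ij z^i w^j near the origin (absolutely convergent
   on a small bidisk): the b_ij are the Taylor coefficients of q at 0. *)
Definition expansion2 (q : C -> C -> C) (b : nat -> nat -> C) :=
  exists2 eps : R, 0 < eps &
    (exists M : R, forall N : nat,
        \sum_(i < N) \sum_(j < N) cabs (b i j) * eps ^+ (i + j) <= M) /\
    (forall z w : C, cabs z < eps -> cabs w < eps ->
        (fun N : nat => \sum_(i < N) \sum_(j < N) b i j * z ^+ i * w ^+ j)
          @ \oo --> q z w).

Definition basin1 (D : set C) (p : C -> C) : set C :=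
  [set z | (forall n, D (iter n p z)) /\
           (fun n => iter n p z) @ \oo --> (0 : C)].

Definition rel_compact_in (B D : set C) :=
  compact (closure B) /\ closure B `<=` D.

Definition supp (b : nat -> nat -> C) : set (nat * nat) :=
  [set ij | b ij.1 ij.2 != 0].

Definition quadrants (b : nat -> nat -> C) : set (R * R) :=
  [set xy | exists ij, supp b ij /\ (ij.1)%:R <= xy.1 /\ (ij.2)%:R <= xy.2].

Definition conv_hull (A : set (R * R)) : set (R * R) :=
  [set x | exists (n : nat) (pt : 'I_n -> R * R) (lam : 'I_n -> R),
      (forall k, A (pt k)) /\ (forall k, 0 <= lam k) /\
      \sum_(k < n) lam k = 1 /\
      x = (\sum_(k < n) lam k * (pt k).1, \sum_(k < n) lam k * (pt k).2)].

Definition newton_polygon (b : nat -> nat -> C) : set (R * R) :=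
  conv_hull (quadrants b).

(* vertices = extreme points *)
Definition extreme_point (A : set (R * R)) (x : R * R) :=
  A x /\ forall (y z : R * R) (t : R), A y -> A z -> 0 < t < 1 ->
    x = (t * y.1 + (1 - t) * z.1, t * y.2 + (1 - t) * z.2) ->
    y = x /\ z = x.

Definition newton_vertices (b : nat -> nat -> C) (s : nat) (n m : nat -> nat) :=
  (forall v, extreme_point (newton_polygon b) v <->
     exists2 k : nat, (1 <= k <= s)%N & v = ((n k)%:R, (m k)%:R)) /\
  (forall k, (1 <= k)%N -> (k < s)%N -> (n k < n k.+1)%N /\ (m k.+1 < m k)%N).

(* y-intercept T_k of the line through (n_k,m_k) and (n_{k+1},m_{k+1}) *)
Definition T_intercept (n m : nat -> nat) (k : nat) : R :=
  (m k)%:R + (n k)%:R * ((m k)%:R - (m k.+1)%:R) / ((n k.+1)%:R - (n k)%:R).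

Definition skew_map (p : C -> C) (q : C -> C -> C) (x : C * C) : C * C :=
  (p x.1, q x.1 x.2).

Definition dom2 (Rad : option R) : set (C * C) := [set x | disk Rad x.1].

Definition preim_iter (Rad : option R) (f : C * C -> C * C) (n : nat)
    (S : set (C * C)) : set (C * C) :=
  [set x | (forall k, (k <= n)%N -> dom2 Rad (iter k f x)) /\ S (iter n f x)].

Definition basin0 (Rad : option R) (f : C * C -> C * C) : set (C * C) :=
  [set x | (forall k, dom2 Rad (iter k f x)) /\
           (fun k => iter k f x) @ \oo --> ((0 : C), (0 : C))].

Definition Ez (Rad : option R) (f : C * C -> C * C) : set (C * C) :=
  \bigcup_(n in [set: nat]) preim_iter Rad f n [set x | x.1 = 0].

Definition Ulplus (r l : R) : set (C * C) :=
  [set x | cabs x.1 < r /\ cabs x.2 < r * (cabs x.1) `^ l].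

Definition Alplus (Rad : option R) (f : C * C -> C * C) (r l : R) : set (C * C) :=
  \bigcup_(n in [set: nat]) preim_iter Rad f n (Ulplus r l).

End SkewProduct.

From HB Require Import structures.
From mathcomp Require Import all_boot all_order all_algebra.
From mathcomp Require Import all_classical all_reals all_analysis.
From mathcomp Require Import complex.
From mathcomp Require Import ring lra zify.
Import Order.TTheory GRing.Theory Num.Theory.
Import numFieldNormedType.Exports.
Local Open Scope ring_scope.
Local Open Scope classical_set_scope.
Set Implicit Arguments.
Unset Strict Implicit.
Unset Printing Implicit Defensive.

(* Measure the size of an orbit (z_k, w_k) near the origin logarithmically:
   u_k = ln eps - ln |z_k| and v_k = ln eps - ln |w_k|.  Since
   z_{k+1} ~ a z_k^delta, u_{k+1} <= delta u_k + O(1).  In Case 4 the line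
   i + alpha j = alpha delta supports the Newton polygon at the vertex
   (gamma, d) and b_{0,delta} = 0, so for l < l' < alpha every monomial of q
   satisfies i + l' j >= mu for some mu > l' delta.  While the orbit stays
   outside U^{l,+} we have v_k <= l' u_k, hence v_{k+1} >= (mu / l') v_k - O(1):
   v would grow strictly faster than u while remaining below l' u, which is
   impossible for an orbit tending to the origin.  So every point of
   A_0 \ E_z enters U^{l,+}.  Conversely, for r small the map contracts
   U^{l,+} geometrically towards the origin and never reaches {z = 0}. *)

Lemma exists_leftmost_minimizer (R : realType) (t : R) (S : nat -> nat -> Prop) i1 j1 :
  0 < t -> S i1 j1 -> exists i0 j0, [/\ S i0 j0,
    forall i j, S i j -> i0%:R + t * j0%:R <= i%:R + t * j%:R &
    forall i j, S i j -> i%:R + t * j%:R = i0%:R + t * j0%:R -> (i0 <= i)%N].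
Proof.
move=> t_gt0 S1.
pose w (ij : nat * nat) : R := ij.1%:R + t * ij.2%:R.
pose c := w (i1, j1).
have c_ge0 : 0 <= c by rewrite /c /w addr_ge0 // mulr_ge0 // ltW.
(* Points of weight at most c lie in the box [0, B)^2, where arg_minP applies. *)
pose B := Num.Def.archi_bound (c + c / t).
have cB : c + c / t < B%:R by apply: archi_boundP; rewrite addr_ge0 // divr_ge0 // ltW.
have low_outside i j : (B <= i)%N || (B <= j)%N -> c < w (i, j).
  have ct : 0 <= c / t by rewrite divr_ge0 // ltW.
  have tj : 0 <= t * j%:R by rewrite mulr_ge0 // ltW.
  have i_ge0 : 0 <= i%:R :> R := ler0n _ _.
  case/orP=> [|]; rewrite -(ler_nat R) => le_B; rewrite /w /=; first lra.
  have : c < t * B%:R by rewrite -ltr_pdivrMl //; lra.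
  have : t * B%:R <= t * j%:R by rewrite ler_wpM2l // ltW.
  lra.
have in_box i j : w (i, j) <= c -> (i < B)%N && (j < B)%N.
  apply: contraTT; rewrite negb_and -!leqNgt => /(low_outside i j).
  by rewrite ltNge.
have /andP [i1B j1B] := in_box i1 j1 (lexx c).
pose P := [pred ij : 'I_B * 'I_B | `[< S ij.1 ij.2 >]].
have P1 : P (Ordinal i1B, Ordinal j1B) by apply/asboolP.
case: (arg_minP (fun ij : 'I_B * 'I_B => w (val ij.1, val ij.2)) P1).
move=> [i2 j2] /asboolP /= S2 min2.
have min i j : S i j -> w (val i2, val j2) <= w (i, j).
  move=> Sij; have [le_c|lt_c] := leP (w (i, j)) c.
    have /andP [iB jB] := in_box i j le_c.
    by apply: (min2 (Ordinal iB, Ordinal jB)); apply/asboolP.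
  by apply: le_trans (ltW lt_c); apply: (min2 _ P1).
have ex_left : exists i, `[< exists j, S i j /\ w (i, j) = w (val i2, val j2) >].
  by exists i2; apply/asboolP; exists j2.
case: (ex_minnP ex_left) => i0 /asboolP [j0 [S0 E0]] left.
exists i0, j0; split => // [i j Sij|i j Sij Eij].
  by rewrite -/(w (i0, j0)) E0 min.
by apply: left; apply/asboolP; exists j; split; rewrite // -E0.
Qed.

Section NewtonPolygon.
Variable R : realType.
Variable b : nat -> nat -> cpx R.
Local Notation N := (newton_polygon b).

Lemma newton_polygon_supp i j : b i j != 0 -> N (i%:R, j%:R).
Proof.
move=> bij; exists 1%N, (fun _ => (i%:R, j%:R)), (fun _ => 1).
rewrite !big_ord1 !mul1r; split; first by move=> _; exists (i, j).
by split=> // _; apply: ler01.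
Qed.

Lemma newton_polygon_up x h : N x -> 0 <= h -> N (x.1, x.2 + h).
Proof.
move=> [n [pt [lam [Npt [lam_ge0 [lam1 ->]]]]]] h_ge0.
exists n, (fun k => ((pt k).1, (pt k).2 + h)), lam; split.
  move=> k; have [ij [Sij [le1 le2]]] := Npt k; exists ij; split=> //=.
  by rewrite le1 (le_trans le2) ?lerDl.
do 2!split=> //=; congr (_, _).
by rewrite [RHS](eq_bigr _ (fun k _ => mulrDr _ _ _)) big_split -mulr_suml lam1 mul1r.
Qed.

Lemma newton_polygon_convex x y t : N x -> N y -> 0 <= t <= 1 ->
  N (t * x.1 + (1 - t) * y.1, t * x.2 + (1 - t) * y.2).
Proof.
move=> [n1 [pt1 [lam1 [Npt1 [lam1_ge0 [sum1 ->]]]]]].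
move=> [n2 [pt2 [lam2 [Npt2 [lam2_ge0 [sum2 ->]]]]]] /andP [t_ge0 t_le1].
pose pt (k : 'I_(n1 + n2)) := match fintype.split k with inl a => pt1 a | inr c => pt2 c end.
pose lam (k : 'I_(n1 + n2)) :=
  match fintype.split k with inl a => t * lam1 a | inr c => (1 - t) * lam2 c end.
have ptl i : pt (lshift n2 i) = pt1 i by rewrite /pt (@unsplitK n1 n2 (inl i)).
have ptr i : pt (rshift n1 i) = pt2 i by rewrite /pt (@unsplitK n1 n2 (inr i)).
have laml i : lam (lshift n2 i) = t * lam1 i by rewrite /lam (@unsplitK n1 n2 (inl i)).
have lamr i : lam (rshift n1 i) = (1 - t) * lam2 i by rewrite /lam (@unsplitK n1 n2 (inr i)).
exists (n1 + n2)%N, pt, lam; do !split.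
- by move=> k; rewrite /pt; case: fintype.split.
- by move=> k; rewrite /lam; case: fintype.split => c; rewrite mulr_ge0 ?subr_ge0.
- by rewrite big_split_ord /= (eq_bigr _ (fun i _ => laml i)) (eq_bigr _ (fun i _ => lamr i))
    -!mulr_sumr sum1 sum2 !mulr1 addrC subrK.
- congr (_, _); rewrite big_split_ord !mulr_sumr /=;
  by congr (_ + _); apply: eq_bigr => i _; rewrite ?laml ?lamr ?ptl ?ptr mulrA.
Qed.

Lemma newton_polygon_not_extreme_above x h :
  N x -> 0 < h -> ~ extreme_point N (x.1, x.2 + h).
Proof.
move=> Nx h_gt0 [_ ext].
have N2h : N (x.1, x.2 + 2 * h) by apply: newton_polygon_up; rewrite // mulr_ge0 ?ltW.
have half : 0 < (1 / 2 : R) < 1 by apply/andP; split; lra.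
have mid : (x.1, x.2 + h) = (1 / 2 * x.1 + (1 - 1 / 2) * x.1,
                             1 / 2 * x.2 + (1 - 1 / 2) * (x.2 + 2 * h)).
  by congr (_, _); field.
have [/(congr1 snd) /= /eqP] := ext x _ _ Nx N2h half mid.
by rewrite eq_sym -subr_eq0 addrC addKr gt_eqF.
Qed.

Lemma newton_polygon_weight_ge t mu x : 0 <= t ->
  (forall i j, b i j != 0 -> mu <= i%:R + t * j%:R) -> N x -> mu <= x.1 + t * x.2.
Proof.
move=> t_ge0 supp_ge [n [pt [lam [Npt [lam_ge0 [lam1 ->]]]]]] /=.
rewrite mulr_sumr -big_split -[mu]mul1r -lam1 mulr_suml /=.
apply: ler_sum => k _; rewrite mulrA [t * _]mulrC -mulrA -mulrDr ler_wpM2l //.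
have [[i j] [bij [le_i le_j]]] := Npt k.
by rewrite (le_trans (supp_ge _ _ bij)) // lerD // ler_wpM2l.
Qed.

Lemma newton_polygon_face_ge t mu i0 x : 0 < t ->
  (forall i j, b i j != 0 -> mu <= i%:R + t * j%:R) ->
  (forall i j, b i j != 0 -> i%:R + t * j%:R = mu -> (i0 <= i)%N) ->
  N x -> x.1 + t * x.2 = mu -> i0%:R <= x.1.
Proof.
move=> t_gt0 supp_ge face_ge [n [pt [lam [Npt [lam_ge0 [lam1 ->]]]]]] /= on_face.
have pt_ge k : mu <= (pt k).1 + t * (pt k).2.
  have [[i j] [bij [le_i le_j]]] := Npt k.
  by rewrite (le_trans (supp_ge _ _ bij)) // lerD // ler_wpM2l // ltW.
have excess_ge0 k : true -> 0 <= lam k * ((pt k).1 + t * (pt k).2 - mu).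
  by move=> _; rewrite mulr_ge0 ?subr_ge0.
have /psumr_eq0P excess0 : \sum_(k < n) lam k * ((pt k).1 + t * (pt k).2 - mu) = 0.
  under eq_bigr do rewrite mulrBr mulrDr mulrCA.
  by rewrite sumrB big_split /= -mulr_sumr -mulr_suml lam1 mul1r -on_face subrr.
have -> : i0%:R = \sum_(k < n) lam k * i0%:R :> R by rewrite -mulr_suml lam1 mul1r.
rewrite -subr_ge0 -sumrB sumr_ge0 // => k _.
rewrite -mulrBr; have /eqP := excess0 excess_ge0 k isT.
rewrite mulf_eq0 => /orP [/eqP ->|]; first by rewrite mul0r.
rewrite subr_eq0 => /eqP pt_face; rewrite mulr_ge0 // subr_ge0.
have [[i j] [bij [le_i le_j]]] := Npt k; have := supp_ge _ _ bij.
have le_tj : t * j%:R <= t * (pt k).2 by rewrite ler_wpM2l // ltW.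
move=> w_ge; have pt1 : (pt k).1 = i%:R by lra.
have /(mulfI (lt0r_neq0 t_gt0)) pt2 : t * (pt k).2 = t * j%:R by lra.
by rewrite pt1 ler_nat (face_ge _ _ bij) // -pt1 -pt2.
Qed.

Lemma extreme_point_leftmost_minimizer (t : R) i0 j0 : 0 < t -> b i0 j0 != 0 ->
  (forall i j, b i j != 0 -> i0%:R + t * j0%:R <= i%:R + t * j%:R) ->
  (forall i j, b i j != 0 -> i%:R + t * j%:R = i0%:R + t * j0%:R -> (i0 <= i)%N) ->
  extreme_point N (i0%:R, j0%:R).
Proof.
move=> t_gt0 b0 min left; split; first exact: newton_polygon_supp.
move=> [y1 y2] [z1 z2] s Ny Nz /andP [s_gt0 s_lt1] [E1 E2] /=.
have wy := newton_polygon_weight_ge (ltW t_gt0) min Ny.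
have wz := newton_polygon_weight_ge (ltW t_gt0) min Nz.
rewrite /= in wy wz.
have fy : y1 + t * y2 = i0%:R + t * j0%:R by nra.
have fz : z1 + t * z2 = i0%:R + t * j0%:R by nra.
have ly := newton_polygon_face_ge t_gt0 min left Ny fy.
have lz := newton_polygon_face_ge t_gt0 min left Nz fz.
rewrite /= in ly lz.
have y1E : y1 = i0%:R by nra.
have z1E : z1 = i0%:R by nra.
have /(mulfI (lt0r_neq0 t_gt0)) y2E : t * y2 = t * j0%:R by lra.
have /(mulfI (lt0r_neq0 t_gt0)) z2E : t * z2 = t * j0%:R by lra.
by rewrite y1E y2E z1E z2E.
Qed.

End NewtonPolygon.

Section NewtonVertices.
Variable R : realType.
Variable b : nat -> nat -> cpx R.
Variables (s : nat) (n m : nat -> nat).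
Hypothesis NV : newton_vertices b s n m.
Local Notation N := (newton_polygon b).

Lemma newton_vertices_mono a c : (1 <= a)%N -> (a < c)%N -> (c <= s)%N ->
  (n a < n c)%N /\ (m c < m a)%N.
Proof.
move=> a_ge1; elim: c => [//|c IH]; rewrite ltnS leq_eqVlt => /orP [/eqP <-|ac] cs.
  exact: NV.2.
have [nac mca] := IH ac (ltnW cs).
have [ncc mcc] := NV.2 c (leq_trans a_ge1 (ltnW ac)) cs.
by split; [apply: ltn_trans ncc | apply: ltn_trans mca].
Qed.

Lemma newton_vertex_extreme a : (1 <= a <= s)%N ->
  extreme_point N ((n a)%:R, (m a)%:R).
Proof. by move=> a_s; apply/(NV.1 _); exists a. Qed.

Section Weight.
Variable t : R.
Hypothesis t_ge0 : 0 <= t.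
Local Notation weight a := ((n a)%:R + t * (m a)%:R).

Lemma newton_vertex_weight_chord a c e :
  (1 <= a)%N -> (a < c)%N -> (c < e)%N -> (e <= s)%N ->
  ((n e)%:R - (n a)%:R) * weight c <=
  ((n e)%:R - (n c)%:R) * weight a + ((n c)%:R - (n a)%:R) * weight e.
Proof.
move=> a_ge1 ac ce es.
have [nac _] := newton_vertices_mono a_ge1 ac (leq_trans (ltnW ce) es).
have [nce _] := newton_vertices_mono (leq_trans a_ge1 (ltnW ac)) ce es.
have a_s : (1 <= a <= s)%N by lia.
have c_s : (1 <= c <= s)%N by lia.
have e_s : (1 <= e <= s)%N by lia.
move: nac nce; rewrite -!(ltr_nat R) => nac nce.
set na := (n a)%:R : R in nac *; set nc := (n c)%:R : R in nac nce *.
set ne := (n e)%:R : R in nce *.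
set ma := (m a)%:R : R; set mc := (m c)%:R : R; set me := (m e)%:R : R.
pose u := (ne - nc) / (ne - na).
have u01 : 0 <= u <= 1.
  by rewrite divr_ge0 ?ler_pdivrMr ?mul1r /=; lra.
have on_chord : u * na + (1 - u) * ne = nc by rewrite /u; field; lra.
have mc_le : mc <= u * ma + (1 - u) * me.
  rewrite leNgt; apply/negP => chord_lt.
  have Nchord := newton_polygon_convex (newton_vertex_extreme a_s).1
    (newton_vertex_extreme e_s).1 u01.
  apply: (newton_polygon_not_extreme_above Nchord
    (_ : 0 < mc - (u * ma + (1 - u) * me))).
    by rewrite subr_gt0.
  by rewrite /= on_chord addrC subrK; apply: newton_vertex_extreme.
have t_mc : t * mc <= t * (u * ma + (1 - u) * me) by rewrite ler_wpM2l.
have dpos : 0 < ne - na by lra.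
have chordE : (ne - na) * (nc + t * (u * ma + (1 - u) * me)) =
  (ne - nc) * (na + t * ma) + (nc - na) * (ne + t * me) by rewrite /u; field; lra.
by rewrite -chordE ler_wpM2l ?lerD2l // ltW.
Qed.

End Weight.

Lemma newton_vertex_minimizes_weight (t : R) i j : 0 < t -> b i j != 0 ->
  exists2 a, (1 <= a <= s)%N & forall i' j', b i' j' != 0 ->
    (n a)%:R + t * (m a)%:R <= i'%:R + t * j'%:R.
Proof.
move=> t_gt0 bij.
have [i0 [j0 [b0 min left]]] :=
  exists_leftmost_minimizer (S := fun i j => b i j != 0) t_gt0 bij.
have /(NV.1 _) [a a_s [E1 E2]] := extreme_point_leftmost_minimizer t_gt0 b0 min left.
by exists a; rewrite // -(mulrIn (oner_neq0 R) E1) -(mulrIn (oner_neq0 R) E2).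
Qed.

Section Case4.
Variables (k delta : nat).
Hypotheses (s_gt2 : (2 < s)%N) (k_ge2 : (2 <= k)%N) (k_lts : (k <= s.-1)%N).
Hypothesis intercepts : T_intercept R n m k <= delta%:R <= T_intercept R n m k.-1.

Local Notation gamma := ((n k)%:R : R).
Local Notation d := ((m k)%:R : R).
Local Notation deltaR := (delta%:R : R).
Local Notation alpha := (gamma / (deltaR - d)).
Local Notation weight t a := ((n a)%:R + t * (m a)%:R).

(* The line i + alpha j = alpha delta passes through the vertex k, and the
   intercept conditions put the neighbouring vertices k - 1 and k + 1 on or
   above it; by convexity so is the whole Newton polygon. *)

Lemma case4_vertex_neighbours :
  [/\ (n k.-1 < n k < n k.+1)%N, (m k.+1 < m k < m k.-1)%N & (0 < n k)%N].
Proof.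
have [lt_n1 lt_m1] := @newton_vertices_mono k k.+1 ltac:(lia) ltac:(lia) ltac:(lia).
have [lt_n0 lt_m0] := @newton_vertices_mono k.-1 k ltac:(lia) ltac:(lia) ltac:(lia).
have [lt_n lt_m] := @newton_vertices_mono 1 k ltac:(lia) ltac:(lia) ltac:(lia).
by rewrite lt_n0 lt_n1 lt_m0 lt_m1; split=> //; apply: leq_ltn_trans lt_n.
Qed.

Lemma case4_d_lt_delta : d < deltaR.
Proof.
have [/andP [_ nk1] /andP [mk1 _] nk_gt0] := case4_vertex_neighbours.
apply: lt_le_trans (andP intercepts).1.
by rewrite /T_intercept ltrDl divr_gt0 ?mulr_gt0 ?subr_gt0 ?ltr_nat ?ltr0n.
Qed.

Lemma case4_alpha_gt0 : 0 < alpha.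
Proof.
have [_ _ nk_gt0] := case4_vertex_neighbours.
by rewrite divr_gt0 ?ltr0n ?subr_gt0 ?case4_d_lt_delta.
Qed.

Lemma case4_vertex_weight : weight alpha k = alpha * deltaR.
Proof.
have := case4_d_lt_delta; rewrite -subr_gt0 => dpos.
by apply: (mulIf (lt0r_neq0 dpos)); field; rewrite lt0r_neq0.
Qed.

Lemma case4_next_weight_ge : alpha * deltaR <= weight alpha k.+1.
Proof.
have [/andP [_ nk1] /andP [mk1 _] _] := case4_vertex_neighbours.
have := case4_d_lt_delta; rewrite -subr_gt0 => dpos.
move: (andP intercepts).1; rewrite /T_intercept -lerBrDl ler_pdivrMr; last first.
  by rewrite subr_gt0 ltr_nat.
move=> Tk; rewrite -(ler_pM2r dpos).
have -> : alpha * deltaR * (deltaR - d) = gamma * deltaR by field; rewrite lt0r_neq0.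
have -> : weight alpha k.+1 * (deltaR - d) = (n k.+1)%:R * (deltaR - d) + gamma * (m k.+1)%:R.
  by field; rewrite lt0r_neq0.
nra.
Qed.

Lemma case4_prev_weight_ge : alpha * deltaR <= weight alpha k.-1.
Proof.
have [/andP [nk0 _] /andP [_ mk0] _] := case4_vertex_neighbours.
have := case4_d_lt_delta; rewrite -subr_gt0 => dpos.
move: (andP intercepts).2; rewrite /T_intercept prednK; last by lia.
rewrite -lerBlDl ler_pdivlMr; last by rewrite subr_gt0 ltr_nat.
move=> Tk0; rewrite -(ler_pM2r dpos).
have -> : alpha * deltaR * (deltaR - d) = gamma * deltaR by field; rewrite lt0r_neq0.
have -> : weight alpha k.-1 * (deltaR - d) = (n k.-1)%:R * (deltaR - d) + gamma * (m k.-1)%:R.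
  by field; rewrite lt0r_neq0.
nra.
Qed.

Lemma case4_vertex_weight_ge a : (1 <= a <= s)%N -> alpha * deltaR <= weight alpha a.
Proof.
move=> /andP [a_ge1 a_les]; have al_ge0 := ltW case4_alpha_gt0.
have [/andP [nk0 nk1] _ _] := case4_vertex_neighbours.
have prev := case4_prev_weight_ge; have next := case4_next_weight_ge.
have on_line := case4_vertex_weight.
case: (ltngtP a k.-1) => [a_lt|a_gt|->] //.
  have := newton_vertex_weight_chord (e := k) al_ge0 a_ge1 a_lt ltac:(lia) ltac:(lia).
  have [na_lt _] := @newton_vertices_mono a k.-1 a_ge1 a_lt ltac:(lia).
  rewrite on_line.
  move: nk0 na_lt; rewrite -!(ltr_nat R) => nk0 na_lt; nra.
case: (ltngtP a k.+1) => [a_lt|a_gt'|->] //.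
  have -> : a = k by lia.
  by rewrite on_line.
have := newton_vertex_weight_chord (a := k) al_ge0 ltac:(lia) (ltnSn k) a_gt' a_les.
have [na_gt _] := @newton_vertices_mono k.+1 a ltac:(lia) a_gt' a_les.
rewrite on_line; move: nk1 na_gt; rewrite -!(ltr_nat R) => nk1 na_gt; nra.
Qed.

Lemma case4_support_weight_ge i j : b i j != 0 -> alpha * deltaR <= i%:R + alpha * j%:R.
Proof.
move=> bij; have [a a_s min] := newton_vertex_minimizes_weight case4_alpha_gt0 bij.
exact: le_trans (case4_vertex_weight_ge a_s) (min _ _ bij).
Qed.

Hypothesis first_vertex : (n 1%N, m 1%N) != (0%N, delta).

Lemma case4_no_pure_power : b 0%N delta = 0.
Proof.
apply/eqP; apply: contraNT first_vertex => b0.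
have min i j : b i j != 0 -> 0%:R + alpha * deltaR <= i%:R + alpha * j%:R.
  by rewrite add0r; apply: case4_support_weight_ge.
have /(NV.1 _) [a /andP [a_ge1 a_les] [E1 E2]] :=
  extreme_point_leftmost_minimizer case4_alpha_gt0 b0 min (fun i _ _ _ => leq0n i).
move: E1 E2 => /(mulrIn (oner_neq0 R)) na0 /(mulrIn (oner_neq0 R)) ma.
have a1 : a = 1%N.
  apply/eqP; rewrite eqn_leq a_ge1 andbT leqNgt; apply/negP => a_gt1.
  by have [] := newton_vertices_mono (leqnn 1) a_gt1 a_les; rewrite -na0.
by rewrite -a1 -na0 -ma.
Qed.

Lemma case4_weight_gap (l : R) : 0 < l < alpha ->
  exists2 mu, l * deltaR < mu & forall i j, b i j != 0 -> mu <= i%:R + l * j%:R.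
Proof.
move=> /andP [l_gt0 l_lt].
(* Over l * delta, a support point gains at least alpha - l if j < delta, l if
   j > delta, and i >= 1 if j = delta. *)
pose g := Num.min 1 (Num.min l (alpha - l)).
have g_gt0 : 0 < g by rewrite !lt_min ltr01 l_gt0 subr_gt0.
have [g1 gl gal] : [/\ g <= 1, g <= l & g <= alpha - l].
  by rewrite !ge_min !lexx !orbT.
exists (l * deltaR + g) => [|i j bij]; first by rewrite ltrDl.
have sup := case4_support_weight_ge bij.
have i_ge0 : 0 <= i%:R :> R := ler0n _ _.
case: (ltngtP j delta) => [jd|dj|jE].
- have jd' : j%:R + 1 <= deltaR by rewrite natr1 ler_nat.
  nra.
- have dj' : deltaR + 1 <= j%:R by rewrite natr1 ler_nat.
  nra.
- rewrite {j}jE in bij sup *; case: i bij {sup i_ge0} => [|i] bij.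
    by rewrite case4_no_pure_power eqxx in bij.
  have : 1 <= i.+1%:R :> R by rewrite ler1n.
  lra.
Qed.

End Case4.
End NewtonVertices.

Section Modulus.
Variable R : realType.
Local Notation C := (cpx R).
Local Open Scope complex_scope.

Lemma normC_cabs (z : C) : `|z| = (cabs z)%:C.
Proof. by []. Qed.

Lemma cabs_ge0 (z : C) : 0 <= cabs z.
Proof. by case: z => x y; apply: sqrtr_ge0. Qed.

Lemma cabs0 : cabs (0 : C) = 0.
Proof. exact: ComplexField.Normc.normc0. Qed.

Lemma cabs_gt0 (z : C) : z != 0 -> 0 < cabs z.
Proof.
move=> z0; rewrite lt_def cabs_ge0 andbT.
by apply: contraNneq z0 => /ComplexField.Normc.eq0_normc ->.
Qed.

Lemma cabs_le0 (z : C) : cabs z <= 0 -> z = 0.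
Proof.
move=> z_le0; apply: ComplexField.Normc.eq0_normc.
by apply/eqP; rewrite eq_le z_le0 cabs_ge0.
Qed.

Lemma cabsM (x y : C) : cabs (x * y) = cabs x * cabs y.
Proof. exact: ComplexField.Normc.normcM. Qed.

Lemma cabsX (z : C) n : cabs (z ^+ n) = cabs z ^+ n.
Proof.
elim: n => [|n IH]; first exact: ComplexField.Normc.normc1.
by rewrite !exprS cabsM IH.
Qed.

Lemma cabsD (x y : C) : cabs (x + y) <= cabs x + cabs y.
Proof. exact: le_normcD. Qed.

Lemma cabsN (x : C) : cabs (- x) = cabs x.
Proof. exact: normcN. Qed.

Lemma cabs_sum n (F : 'I_n -> C) : cabs (\sum_(i < n) F i) <= \sum_(i < n) cabs (F i).
Proof.
elim: n F => [|n IH] F; first by rewrite !big_ord0 cabs0.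
by rewrite !big_ord_recr /= (le_trans (cabsD _ _)) // lerD2r IH.
Qed.

Lemma ltC_cabs (z : C) (e : R) : (`|z| < e%:C) = (cabs z < e).
Proof. by rewrite normC_cabs ltcR. Qed.

Lemma gtC0_real (e : C) : 0 < e -> e = (complex.Re e)%:C /\ 0 < complex.Re e.
Proof. by case: e => x y; rewrite ltcE /= => /andP [/eqP -> ->]. Qed.

Lemma cvg_cabsP (u : nat -> C) (L : C) : u @ \oo --> L <->
  forall e : R, 0 < e -> exists N, forall k, (N <= k)%N -> cabs (L - u k) < e.
Proof.
split=> [/cvgrPdist_lt cvgu e e_gt0|near_L].
  have [N _ HN] := cvgu e%:C (eqbRL (ltcR _ _) e_gt0).
  by exists N => k Nk; rewrite -ltC_cabs; apply: HN.
apply/cvgrPdist_lt => e /gtC0_real [-> e_gt0].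
have [N HN] := near_L _ e_gt0.
by exists N => // k Nk; rewrite ltC_cabs; apply: HN.
Qed.

Lemma cvg_pairP (u : nat -> C * C) (l : C * C) : u @ \oo --> l <->
  (fun k => (u k).1) @ \oo --> l.1 /\ (fun k => (u k).2) @ \oo --> l.2.
Proof.
split=> [cvgu|[cvg1 cvg2]]; first by split; apply: cvg_comp cvgu _;
  [apply: cvg_fst | apply: cvg_snd].
have := cvg_pair cvg1 cvg2.
have -> : (fun k => ((u k).1, (u k).2)) = u by apply/funext => k; case: (u k).
by move=> cvgu; exact: cvgu.
Qed.

Lemma cvg0_pair_small (u : nat -> C * C) : u @ \oo --> (0 : C, 0 : C) ->
  forall e : R, 0 < e ->
    exists N, forall k, (N <= k)%N -> cabs (u k).1 < e /\ cabs (u k).2 < e.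
Proof.
move=> /cvg_pairP [/cvg_cabsP cvg1 /cvg_cabsP cvg2] e e_gt0.
have [N1 near1] := cvg1 e e_gt0; have [N2 near2] := cvg2 e e_gt0.
exists (maxn N1 N2) => k; rewrite geq_max => /andP [/near1 + /near2].
by rewrite /= !sub0r !cabsN.
Qed.

Lemma vanish_at0_of_power_bound (g : C -> C) (B rho : R) (delta : nat) :
  (0 < delta)%N -> 0 < rho ->
  (forall z, cabs z < rho -> cabs (g z) <= B * cabs z ^+ delta) -> g 0 = 0.
Proof.
move=> delta_gt0 rho_gt0 g_le; apply: cabs_le0.
by have := g_le 0; rewrite cabs0 expr0n gtn_eqF // mulr0; apply.
Qed.

Lemma disk_contains_ball (Rad : option R) : (forall R0, Rad = Some R0 -> 0 < R0) ->
  exists2 Rb : R, 0 < Rb & forall z, cabs z < Rb -> disk Rad z.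
Proof. by case: Rad => [R0 /(_ R0 erefl) R0_gt0|_]; [exists R0 | exists 1]. Qed.

Lemma near0_dominant_bounds (p : C -> C) (a : C) (delta : nat) :
  a != 0 ->
  (fun z => p z - a * z ^+ delta) =O_ (nbhs (0 : C)) (fun z => z ^+ delta.+1) ->
  exists2 rho : R, 0 < rho & forall z, cabs z < rho ->
    cabs a / 2 * cabs z ^+ delta <= cabs (p z) <= 2 * cabs a * cabs z ^+ delta.
Proof.
move=> a0 /eqO_exP [K /gtC0_real [-> K_gt0] near0].
have [e /= /gtC0_real [eE e_gt0] bigO] := nbhs_norm0P.1 near0.
have a_gt0 := cabs_gt0 a0.
exists (Num.min (complex.Re e) (cabs a / (2 * complex.Re K))).
  by rewrite lt_min e_gt0 divr_gt0 // mulr_gt0.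
move=> z; rewrite lt_min => /andP [ze zK].
have := bigO z; rewrite /= eE ltC_cabs => /(_ ze).
rewrite !normC_cabs -rmorphM lecR cabsX => rem_le.
have z_ge0 := cabs_ge0 z; have zd_ge0 := exprn_ge0 delta z_ge0.
have rem_small : complex.Re K * cabs z ^+ delta.+1 <= cabs a / 2 * cabs z ^+ delta.
  rewrite exprS mulrA ler_wpM2r //.
  by move: zK; rewrite ltr_pdivlMr ?mulr_gt0 // => zK; rewrite ler_pdivlMr //; lra.
have {rem_small}rem_le := le_trans rem_le rem_small.
have up := cabsD (p z - a * z ^+ delta) (a * z ^+ delta).
have low := cabsD (p z) (- (p z - a * z ^+ delta)).
rewrite subrK cabsM cabsX in up; rewrite cabsN opprB addrC subrK cabsM cabsX in low.
by apply/andP; split; nra.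
Qed.

End Modulus.

Section Expansion.
Variable R : realType.
Local Notation C := (cpx R).
Variables (q : C -> C -> C) (b : nat -> nat -> C) (eps M : R).
Hypothesis eps_gt0 : 0 < eps.
Hypothesis coef_bound :
  forall N, \sum_(i < N) \sum_(j < N) cabs (b i j) * eps ^+ (i + j) <= M.
Hypothesis q_series : forall z w : C, cabs z < eps -> cabs w < eps ->
  (fun N => \sum_(i < N) \sum_(j < N) b i j * z ^+ i * w ^+ j) @ \oo --> q z w.

Lemma expansion_monomial_bound (z w : C) (G : R) : cabs z < eps -> cabs w < eps ->
  0 <= G -> (forall i j, b i j != 0 -> (cabs z / eps) ^+ i * (cabs w / eps) ^+ j <= G) ->
  cabs (q z w) <= G * M.
Proof.
move=> z_lt w_lt G_ge0 monoG.
pose S N := \sum_(i < N) \sum_(j < N) b i j * z ^+ i * w ^+ j.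
have S_le N : cabs (S N) <= G * M.
  apply: le_trans (cabs_sum _) _; rewrite (le_trans _ (ler_wpM2l G_ge0 (coef_bound N))) //.
  rewrite mulr_sumr ler_sum // => i _; apply: le_trans (cabs_sum _) _.
  rewrite mulr_sumr ler_sum // => j _; rewrite !cabsM !cabsX.
  have [->|bij] := eqVneq (b i j) 0; first by rewrite cabs0 !mul0r mulr0.
  have -> : cabs (b i j) * cabs z ^+ i * cabs w ^+ j =
      (cabs (b i j) * eps ^+ (i + j)) * ((cabs z / eps) ^+ i * (cabs w / eps) ^+ j).
    by rewrite !exprMn exprD !exprVn; field; rewrite ?expf_neq0 // gt_eqF.
  by rewrite mulrC ler_wpM2r ?monoG // mulr_ge0 ?cabs_ge0 // exprn_ge0 // ltW.
apply/ler_addgt0Pr => e e_gt0.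
have [N /(_ N (leqnn N)) close] := (cvg_cabsP _ _).1 (q_series z_lt w_lt) e e_gt0.
rewrite -(subrK (S N) (q z w)); apply: le_trans (cabsD _ _) _.
by rewrite addrC lerD // ltW.
Qed.

Lemma expansion_bound_no_constant_linear (z w : C) : b 0%N 0%N = 0 -> b 0%N 1%N = 0 ->
  cabs z < eps -> cabs w < eps ->
  cabs (q z w) <= (cabs z / eps + (cabs w / eps) ^+ 2) * M.
Proof.
move=> b00 b01 z_lt w_lt.
have unit_ratio x : cabs x < eps -> 0 <= cabs x / eps <= 1.
  move=> x_lt; rewrite divr_ge0 ?cabs_ge0 ?(ltW eps_gt0) //=.
  by rewrite ler_pdivrMr // mul1r ltW.
move: (unit_ratio z z_lt) (unit_ratio w w_lt) => /andP [Z0 Z1] /andP [W0 W1].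
apply: expansion_monomial_bound => // [|i j bij]; first by rewrite addr_ge0 ?exprn_ge0.
have Zi := exprn_ge0 i Z0; have Wj := exprn_ge0 j W0; have W2 := exprn_ge0 2 W0.
have [j_ge2|j_lt2] := leqP 2 j.
  have := exprn_ile1 i Z0 Z1; have : (cabs w / eps) ^+ j <= (cabs w / eps) ^+ 2.
    by rewrite -(subnKC j_ge2) exprD ler_piMr // exprn_ile1.
  nra.
have i_ge1 : (1 <= i)%N.
  by case: i bij {Zi} => [|i] //; case: j j_lt2 {Wj} => [|[|j]] //; rewrite ?b00 ?b01 eqxx.
have : (cabs z / eps) ^+ i <= cabs z / eps.
  by rewrite -(subnKC i_ge1) exprD expr1 ler_piMr // exprn_ile1.
have := exprn_ile1 j W0 W1.
nra.
Qed.

End Expansion.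

Section Growth.
Variable R : realType.

Lemma expr_eventually_lt (x e : R) : `|x| < 1 -> 0 < e ->
  exists J, forall j, (J <= j)%N -> `|x ^+ j| < e.
Proof.
move=> x_lt1 e_gt0; have /cvgrPdist_lt /(_ e e_gt0) [J _ near] := cvg_expr x_lt1.
by exists J => j Jj; rewrite -normrN -sub0r; apply: near.
Qed.

Lemma geometric_growth_unbounded (r : nat -> R) (rho L : R) (n0 : nat) :
  1 < rho -> 0 < r n0 -> (forall k, (n0 <= k)%N -> rho * r k <= r k.+1) ->
  ~ (forall k, (n0 <= k)%N -> r k <= L).
Proof.
move=> rho_gt1 r0_gt0 grow bounded.
have rho_gt0 : 0 < rho := lt_trans ltr01 rho_gt1.
have r_ge j : rho ^+ j * r n0 <= r (n0 + j)%N.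
  elim: j => [|j IH]; first by rewrite expr0 mul1r addn0.
  rewrite addnS exprS -mulrA (le_trans _ (grow _ (leq_addr _ _))) //.
  by rewrite ler_pM2l.
have inv_lt1 : `|rho^-1| < 1 by rewrite ger0_norm ?invr_ge0 ?ltW // invf_lt1.
have L_gt0 : 0 < L := lt_le_trans r0_gt0 (bounded _ (leqnn _)).
have [J /(_ J (leqnn J))] := expr_eventually_lt inv_lt1 (divr_gt0 r0_gt0 L_gt0).
rewrite ger0_norm ?exprn_ge0 ?invr_ge0 ?ltW // exprVn ltr_pdivlMr // => small.
have := le_trans (r_ge J) (bounded _ (leq_addr J n0)).
have pos : 0 < rho ^- J by rewrite invr_gt0 exprn_gt0.
rewrite -(ler_pM2l pos) mulrA mulVf ?gt_eqF ?exprn_gt0 //.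
by rewrite mul1r leNgt small.
Qed.

Lemma ratio_growth (a c u u' v v' : R) : 0 < a -> 0 < c -> 0 < u -> 0 < u' -> 0 <= v ->
  a * v <= v' -> u' <= c * u -> a / c * (v / u) <= v' / u'.
Proof.
move=> a_gt0 c_gt0 u_gt0 u'_gt0 v_ge0 v_le u_le.
have v'_ge0 : 0 <= v' := le_trans (mulr_ge0 (ltW a_gt0) v_ge0) v_le.
rewrite -subr_ge0.
have -> : v' / u' - a / c * (v / u) = (c * u * v' - a * v * u') / (c * u' * u).
  by field; rewrite !gt_eqF.
rewrite divr_ge0 ?(ltW (mulr_gt0 (mulr_gt0 c_gt0 u'_gt0) u_gt0)) // subr_ge0.
have := ler_wpM2r (ltW u'_gt0) v_le; have := ler_wpM2l v'_ge0 u_le.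
lra.
Qed.

(* Once v is large enough to absorb K, v grows by a factor a' and u by at most
   c' < a' per step, so v / u grows geometrically while staying below L. *)
Lemma slower_growth_not_divergent (u v : nat -> R) (a c L K : R) (N : nat) :
  0 < c < a -> 0 < L ->
  (forall k, (N <= k)%N ->
    [/\ 0 < v k, v k <= L * u k, a * v k - K <= v k.+1 & u k.+1 <= c * u k + K]) ->
  ~ (forall T, exists N', forall k, (N' <= k)%N -> T <= v k).
Proof.
move=> /andP [c_gt0 c_lt_a] L_gt0 rec v_unbounded.
pose a' := (2 * a + c) / 3; pose c' := (a + 2 * c) / 3.
have [c'_gt0 c'_lt_a' aa' cc'] : [/\ 0 < c', c' < a', 0 < a - a' & 0 < c' - c].
  by rewrite /a' /c'; split; lra.
pose K' := Num.max K 0.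
have [K_le K'_ge0] : K <= K' /\ 0 <= K' by rewrite !le_max !lexx orbT.
have [N1 v_big] := v_unbounded (K' / (a - a') + L * K' / (c' - c)).
pose n0 := maxn N N1.
have step k : (n0 <= k)%N -> [/\ 0 < u k, a' * v k <= v k.+1 & u k.+1 <= c' * u k].
  move=> k_ge; have [v_gt0 vu v_rec u_rec] := rec k (leq_trans (leq_maxl _ _) k_ge).
  have big := v_big k (leq_trans (leq_maxr _ _) k_ge).
  have K'_a : K' <= (a - a') * v k.
    rewrite [X in _ <= X]mulrC -ler_pdivrMr //; apply: le_trans _ big.
    by rewrite lerDl divr_ge0 ?mulr_ge0 // ltW.
  have K'_c : L * K' <= (c' - c) * v k.
    rewrite [X in _ <= X]mulrC -ler_pdivrMr //; apply: le_trans _ big.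
    by rewrite lerDr divr_ge0 // ltW.
  have u_gt0 : 0 < u k by rewrite -(pmulr_rgt0 _ L_gt0); lra.
  split=> //; first lra.
  have : L * K' <= L * ((c' - c) * u k) by apply: le_trans K'_c _; nra.
  by rewrite ler_pM2l //; lra.
apply: (@geometric_growth_unbounded (fun k => v k / u k) (a' / c') L n0).
- by rewrite ltr_pdivlMr ?mul1r.
- have [u_gt0 _ _] := step n0 (leqnn _).
  by have [v_gt0 _ _ _] := rec n0 (leq_maxl _ _); rewrite divr_gt0.
- move=> k k_ge; have [u_gt0 v_step u_step] := step k k_ge.
  have [u1_gt0 _ _] := step k.+1 (leqW k_ge).
  have [v_gt0 _ _ _] := rec k (leq_trans (leq_maxl _ _) k_ge).
  exact: ratio_growth (lt_trans c'_gt0 c'_lt_a') c'_gt0 u_gt0 u1_gt0 (ltW v_gt0) v_step u_step.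
- move=> k k_ge; have [u_gt0 _ _] := step k k_ge.
  have [_ vu _ _] := rec k (leq_trans (leq_maxl _ _) k_ge).
  by rewrite ler_pdivrMr // mulrC.
Qed.

End Growth.

Section SmallOrbits.
Variable R : realType.
Local Notation C := (cpx R).
Variables (p : C -> C) (q : C -> C -> C) (A rho eps M : R) (delta : nat).
Hypothesis p_bound : forall z, cabs z < rho ->
  A / 2 * cabs z ^+ delta <= cabs (p z) <= 2 * A * cabs z ^+ delta.
Hypothesis q_bound : forall z w, cabs z < eps -> cabs w < eps ->
  cabs (q z w) <= (cabs z / eps + (cabs w / eps) ^+ 2) * M.
Hypotheses (A_gt0 : 0 < A) (rho_gt0 : 0 < rho) (eps_gt0 : 0 < eps) (M_ge0 : 0 <= M).
Hypothesis delta_ge2 : (2 <= delta)%N.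
Local Notation f := (skew_map p q).

Lemma p_contracts (sig : R) z : sig < rho -> sig * (4 * (A + 1)) <= 1 -> cabs z <= sig ->
  cabs (p z) <= cabs z / 2 /\ (z != 0 -> p z != 0).
Proof.
move=> sig_rho sigA z_le.
have z_ge0 := cabs_ge0 z.
have /andP [p_low p_up] := p_bound (le_lt_trans z_le sig_rho).
have sig_ge0 : 0 <= sig := le_trans z_ge0 z_le.
have z1 : cabs z <= 1.
  have : 0 <= A * sig by rewrite mulr_ge0 // ltW.
  lra.
have zd : cabs z ^+ delta <= cabs z ^+ 2.
  by rewrite -(subnKC delta_ge2) exprD ler_piMr ?exprn_ge0 ?exprn_ile1.
split.
  have : cabs (p z) <= 2 * A * (cabs z * cabs z).
    by rewrite -expr2 (le_trans p_up) // ler_wpM2l // mulr_ge0 // ltW.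
  have : A * (cabs z * cabs z) <= A * (sig * cabs z) by rewrite ler_wpM2l ?(ltW A_gt0) // ler_wpM2r.
  have : 0 <= cabs z * (1 - 4 * (A * sig)) by rewrite mulr_ge0 //; lra.
  lra.
move=> z0; apply: contraTneq p_low => ->; rewrite cabs0 -ltNge.
by rewrite mulr_gt0 ?divr_gt0 ?exprn_gt0 ?cabs_gt0.
Qed.

Lemma q_contracts (sig tau g : R) z w :
  0 <= sig -> 0 <= tau -> tau < eps -> tau * M <= eps ^+ 2 / 4 ->
  sig < eps -> sig * M <= tau * eps / 4 ->
  0 <= g <= 1 -> cabs z <= sig * g -> cabs w <= tau * g -> cabs (q z w) <= tau * g / 2.
Proof.
move=> sig_ge0 tau_ge0 tau_eps tauM sig_eps sigM /andP [g_ge0 g_le1] z_le w_le.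
have z_ge0 := cabs_ge0 z; have w_ge0 := cabs_ge0 w.
apply: le_trans (q_bound _ _) _; [nra | nra |].
have -> : (cabs z / eps + (cabs w / eps) ^+ 2) * M =
  (cabs z * M * eps + cabs w ^+ 2 * M) / eps ^+ 2 by field; rewrite gt_eqF.
rewrite ler_pdivrMr ?exprn_gt0 //.
have zM : cabs z * M <= tau * eps / 4 * g.
  have : cabs z * M <= sig * g * M by rewrite ler_wpM2r.
  have : sig * M * g <= tau * eps / 4 * g by rewrite ler_wpM2r.
  lra.
have wM : cabs w ^+ 2 * M <= tau * g * (eps ^+ 2 / 4).
  have w2 : cabs w ^+ 2 <= (tau * g) ^+ 2 by rewrite lerXn2r // nnegrE mulr_ge0.
  have -> : tau * g * (eps ^+ 2 / 4) = tau * g ^+ 2 * (eps ^+ 2 / 4) +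
    tau * (g - g ^+ 2) * (eps ^+ 2 / 4) by ring.
  have : 0 <= tau * (g - g ^+ 2) * (eps ^+ 2 / 4).
    rewrite !mulr_ge0 ?divr_ge0 ?exprn_ge0 ?(ltW eps_gt0) // subr_ge0 expr2.
    by rewrite ler_piMr.
  have : cabs w ^+ 2 * M <= tau * g ^+ 2 * (tau * M).
    have -> : tau * g ^+ 2 * (tau * M) = (tau * g) ^+ 2 * M by ring.
    by rewrite ler_wpM2r.
  have : tau * g ^+ 2 * (tau * M) <= tau * g ^+ 2 * (eps ^+ 2 / 4).
    by rewrite ler_wpM2l ?mulr_ge0 ?exprn_ge0.
  lra.
have : 0 <= tau * g * eps by rewrite !mulr_ge0 // ltW.
nra.
Qed.

Lemma small_orbits_contract : exists sig tau : R, [/\ 0 < sig <= 1, 0 < tau &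
  forall y, cabs y.1 < sig -> cabs y.2 <= tau -> forall j,
    [/\ cabs (iter j f y).1 <= cabs y.1 / 2 ^+ j, cabs (iter j f y).2 <= tau / 2 ^+ j &
        y.1 != 0 -> (iter j f y).1 != 0]].
Proof.
have M1_gt0 : 0 < M + 1 := ltr_wpDl M_ge0 ltr01.
have A1_gt0 : 0 < A + 1 := ltr_wpDl (ltW A_gt0) ltr01.
have eps_half : eps / 2 < eps by rewrite ltr_pdivrMr // ltr_pMr // ltr1n.
pose tau := Num.min (eps / 2) (eps ^+ 2 / (4 * (M + 1))).
have tau_gt0 : 0 < tau by rewrite lt_min !divr_gt0 ?exprn_gt0 ?mulr_gt0.
have [tau_eps tau_eps2] : tau <= eps / 2 /\ tau <= eps ^+ 2 / (4 * (M + 1)).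
  by rewrite !ge_min !lexx orbT.
clearbody tau.
have tauM : tau * M <= eps ^+ 2 / 4.
  by move: tau_eps2; rewrite ler_pdivlMr ?mulr_gt0 //; nra.
pose sig := Num.min (Num.min (eps / 2) (rho / 2))
                    (Num.min (1 / (4 * (A + 1))) (tau * eps / (4 * (M + 1)))).
have sig_gt0 : 0 < sig by rewrite !lt_min !divr_gt0 ?mulr_gt0.
have [[sig_eps sig_rho] [sig_A sig_tau]] :
    (sig <= eps / 2 /\ sig <= rho / 2) /\
    (sig <= 1 / (4 * (A + 1)) /\ sig <= tau * eps / (4 * (M + 1))).
  by rewrite !ge_min !lexx !orbT.
clearbody sig.
have sigA : sig * (4 * (A + 1)) <= 1 by rewrite -ler_pdivlMr ?mulr_gt0.
have sigM : sig * M <= tau * eps / 4.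
  by move: sig_tau; rewrite ler_pdivlMr ?mulr_gt0 //; nra.
have A_ge0 := ltW A_gt0.
exists sig, tau; split=> //; first by rewrite sig_gt0 /=; nra.
move=> y y1_lt y2_le; elim=> [|j [z_le w_le z_neq0]]; first by rewrite !divr1 lexx.
have g_ge0 : 0 <= (2 ^+ j)^-1 :> R by rewrite invr_ge0 exprn_ge0.
have g_le1 : (2 ^+ j)^-1 <= 1 :> R by rewrite invf_le1 ?exprn_gt0 // exprn_ege1 // ler1n.
have y1_ge0 := cabs_ge0 y.1.
have z_sig : cabs (iter j f y).1 <= sig * (2 ^+ j)^-1.
  by apply: le_trans z_le _; rewrite ler_wpM2r // ltW.
have [p_le p_neq0] := p_contracts (sig := sig) (z := (iter j f y).1) ltac:(lra) sigA
  (le_trans z_sig (ler_piMr (ltW sig_gt0) g_le1)).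
rewrite iterS /= exprSr invfM !mulrA; split.
- by apply: le_trans p_le _; rewrite ler_wpM2r.
- apply: q_contracts (ltW sig_gt0) (ltW tau_gt0) (le_lt_trans tau_eps eps_half) tauM
    (le_lt_trans sig_eps eps_half) sigM _ z_sig w_le.
  by rewrite g_ge0 g_le1.
- by move=> /z_neq0 /p_neq0.
Qed.

End SmallOrbits.

Lemma outside_Ulplus_log (R : realType) (eps r l l' : R) (z w : cpx R) :
  0 < eps -> 0 < r -> 0 < l < l' ->
  0 < cabs z < expR (((l' - 1) * ln eps + ln r) / (l' - l)) ->
  r * cabs z `^ l <= cabs w -> ln eps - ln (cabs w) <= l' * (ln eps - ln (cabs z)).
Proof.
move=> eps_gt0 r_gt0 /andP [l_gt0 ll'] /andP [z_gt0 z_lt] w_ge.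
have rz_gt0 : 0 < r * cabs z `^ l by rewrite mulr_gt0 ?powR_gt0.
have w_gt0 := lt_le_trans rz_gt0 w_ge.
move: w_ge; rewrite -ler_ln ?posrE //.
rewrite lnM ?posrE ?powR_gt0 // ln_powR => w_ge.
move: z_lt; rewrite -ltr_ln ?posrE ?expR_gt0 // expRK ltr_pdivlMr ?subr_gt0 // => z_lt.
nra.
Qed.

Section Escape.
Variable R : realType.
Local Notation C := (cpx R).
Variables (p : C -> C) (q : C -> C -> C) (b : nat -> nat -> C).
Variables (A rho eps M : R) (delta : nat).
Hypothesis p_low : forall z, cabs z < rho -> A / 2 * cabs z ^+ delta <= cabs (p z).
Hypothesis q_mono : forall z w G, cabs z < eps -> cabs w < eps -> 0 <= G ->
  (forall i j, b i j != 0 -> (cabs z / eps) ^+ i * (cabs w / eps) ^+ j <= G) ->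
  cabs (q z w) <= G * M.
Hypotheses (A_gt0 : 0 < A) (rho_gt0 : 0 < rho) (eps_gt0 : 0 < eps) (M_ge0 : 0 <= M).

Lemma p_log_step z : 0 < cabs z < rho ->
  ln eps - ln (cabs (p z)) <=
  delta%:R * (ln eps - ln (cabs z)) + ((1 - delta%:R) * ln eps - ln (A / 2)).
Proof.
move=> /andP [z_gt0 z_lt]; have low := p_low z_lt.
have low_gt0 : 0 < A / 2 * cabs z ^+ delta by rewrite mulr_gt0 ?divr_gt0 ?exprn_gt0.
have p_gt0 := lt_le_trans low_gt0 low.
move: low; rewrite -ler_ln ?posrE //.
rewrite lnM ?posrE ?divr_gt0 ?exprn_gt0 // lnXn // -mulr_natr.
lra.
Qed.

Lemma q_log_step (l' mu : R) z w : 0 < l' ->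
  (forall i j, b i j != 0 -> mu <= i%:R + l' * j%:R) ->
  0 < cabs z < eps -> 0 < cabs w < eps -> 0 < cabs (q z w) ->
  ln eps - ln (cabs w) <= l' * (ln eps - ln (cabs z)) ->
  mu / l' * (ln eps - ln (cabs w)) - (ln (M + 1) - ln eps) <= ln eps - ln (cabs (q z w)).
Proof.
move=> l'_gt0 gap /andP [z_gt0 z_lt] /andP [w_gt0 w_lt] q_gt0 vu.
set u := ln eps - ln (cabs z) in vu *; set v := ln eps - ln (cabs w) in vu *.
have v_gt0 : 0 < v by rewrite subr_gt0 ltr_ln ?posrE.
have ratioE x : 0 < x -> x / eps = expR (- (ln eps - ln x)).
  by move=> x_gt0; rewrite opprB expRD expRN !lnK ?posrE.
pose G := expR (- (mu / l' * v)).
have mono i j : b i j != 0 -> (cabs z / eps) ^+ i * (cabs w / eps) ^+ j <= G.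
  move=> bij; rewrite !ratioE // -!expRM_natl -expRD ler_expR.
  have u_ge : v / l' <= u by rewrite ler_pdivrMr // mulrC.
  have : mu / l' * v <= (i%:R + l' * j%:R) / l' * v.
    by rewrite ler_wpM2r ?ler_wpM2r ?invr_ge0 ?(ltW l'_gt0) ?(ltW v_gt0) ?gap.
  have -> : (i%:R + l' * j%:R) / l' * v = i%:R * (v / l') + j%:R * v by field; lra.
  have : i%:R * (v / l') <= i%:R * u by rewrite ler_wpM2l.
  by rewrite -/u -/v; lra.
have M1_gt0 : 0 < M + 1 := ltr_wpDl M_ge0 ltr01.
have q_le : cabs (q z w) <= G * (M + 1).
  apply: le_trans (q_mono z_lt w_lt (ltW (expR_gt0 _)) mono) _.
  by rewrite ler_wpM2l ?(ltW (expR_gt0 _)) // lerDl.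
move: q_le; rewrite -ler_ln ?posrE ?mulr_gt0 ?expR_gt0 // lnM ?posrE ?expR_gt0 // expRK.
lra.
Qed.

Lemma orbit_log_recursions (l l' mu r K : R) z w : 0 < l < l' -> 0 < r ->
  (forall i j, b i j != 0 -> mu <= i%:R + l' * j%:R) ->
  ln (M + 1) - ln eps <= K -> (1 - delta%:R) * ln eps - ln (A / 2) <= K ->
  0 < cabs z < expR (((l' - 1) * ln eps + ln r) / (l' - l)) ->
  cabs z < rho -> cabs z < eps -> 0 < cabs w < eps ->
  r * cabs z `^ l <= cabs w -> 0 < cabs (q z w) ->
  [/\ 0 < ln eps - ln (cabs w), ln eps - ln (cabs w) <= l' * (ln eps - ln (cabs z)),
      mu / l' * (ln eps - ln (cabs w)) - K <= ln eps - ln (cabs (q z w)) &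
      ln eps - ln (cabs (p z)) <= delta%:R * (ln eps - ln (cabs z)) + K].
Proof.
move=> l_range r_gt0 gap K1 K2 z_th z_rho z_eps w_eps w_ge q_gt0.
have l'_gt0 := lt_trans (andP l_range).1 (andP l_range).2.
have z_gt0 := (andP z_th).1.
have vu := outside_Ulplus_log eps_gt0 r_gt0 l_range z_th w_ge.
have := q_log_step l'_gt0 gap (introT andP (conj z_gt0 z_eps)) w_eps q_gt0 vu.
have := p_log_step (introT andP (conj z_gt0 z_rho)).
case/andP: w_eps => w_gt0 w_lt; have : ln (cabs w) < ln eps by rewrite ltr_ln ?posrE.
move=> *; split=> //; lra.
Qed.

Lemma orbit_enters_Ulplus (l l' mu r : R) x : 0 < l < l' -> 0 < r ->
  (0 < delta)%N -> l' * delta%:R < mu ->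
  (forall i j, b i j != 0 -> mu <= i%:R + l' * j%:R) ->
  (forall k, (iter k (skew_map p q) x).1 != 0) ->
  (fun k => iter k (skew_map p q) x) @ \oo --> (0 : C, 0 : C) ->
  exists k, Ulplus r l (iter k (skew_map p q) x).
Proof.
move=> l_range r_gt0 delta_gt0 mu_gt gap z_neq0 /cvg0_pair_small small_orbit.
have /andP [l_gt0 ll'] := l_range; have l'_gt0 := lt_trans l_gt0 ll'.
apply/not_existsP => outside.
pose z k := (iter k (skew_map p q) x).1; pose w k := (iter k (skew_map p q) x).2.
pose th := expR (((l' - 1) * ln eps + ln r) / (l' - l)).
have c_gt0 : 0 < Num.min (Num.min th rho) (Num.min eps r).
  by rewrite !lt_min expR_gt0 rho_gt0 eps_gt0 r_gt0.
have [N0 small] := small_orbit _ c_gt0.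
have near0 k : (N0 <= k)%N -> [/\ 0 < cabs (z k) < th, cabs (z k) < rho,
    cabs (z k) < eps, 0 < cabs (w k) < eps & r * cabs (z k) `^ l <= cabs (w k)].
  move=> /small []; rewrite !lt_min => /andP [/andP [z_th z_rho] /andP [z_eps z_r]].
  move=> /andP [_ /andP [w_eps _]].
  have z_gt0 : 0 < cabs (z k) := cabs_gt0 (z_neq0 k).
  have w_ge : r * cabs (z k) `^ l <= cabs (w k).
    by rewrite leNgt; apply/negP => w_lt; apply: (outside k).
  rewrite z_gt0 z_th z_rho z_eps w_eps w_ge (lt_le_trans _ w_ge) //.
  by rewrite mulr_gt0 ?powR_gt0.
pose K := Num.max (ln (M + 1) - ln eps) ((1 - delta%:R) * ln eps - ln (A / 2)).
have [K1 K2] : ln (M + 1) - ln eps <= K /\ (1 - delta%:R) * ln eps - ln (A / 2) <= K.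
  by rewrite !le_max !lexx orbT.
apply: (@slower_growth_not_divergent R (fun k => ln eps - ln (cabs (z k)))
  (fun k => ln eps - ln (cabs (w k))) (mu / l') delta%:R l' K N0).
- by rewrite ltr0n delta_gt0 ltr_pdivlMr // mulrC.
- exact: l'_gt0.
- move=> k k_ge; have [z_th z_rho z_eps w_eps w_ge] := near0 k k_ge.
  have [_ _ _ /andP [w1_gt0 _] _] := near0 k.+1 (leqW k_ge).
  exact: (orbit_log_recursions l_range r_gt0 gap K1 K2 z_th z_rho z_eps w_eps w_ge w1_gt0).
move=> T; have eT_gt0 : 0 < eps * expR (- T) by rewrite mulr_gt0 ?expR_gt0.
have [N1 N1_small] := small_orbit _ eT_gt0.
exists (maxn N0 N1) => k; rewrite geq_max => /andP [/near0 [_ _ _ /andP [w_gt0 _] _]].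
move=> /N1_small [_]; rewrite -ltr_ln ?posrE // lnM ?posrE ?expR_gt0 // expRK -/(w k).
lra.
Qed.

End Escape.

Lemma cvg0_geometric_bound (R : realType) (s : nat -> cpx R) (c : R) (n0 : nat) :
  (forall k, (n0 <= k)%N -> cabs (s k) <= c / 2 ^+ (k - n0)) -> s @ \oo --> 0.
Proof.
move=> s_le; apply/cvg_cabsP => e e_gt0.
have half : `|2^-1 : R| < 1 by rewrite ger0_norm ?invr_ge0 // invf_lt1 ?ltr1n.
have [J small] := expr_eventually_lt half (divr_gt0 e_gt0 (ltr_wpDl (normr_ge0 c) ltr01)).
exists (n0 + J)%N => k k_ge; rewrite sub0r cabsN.
have := small (k - n0)%N ltac:(lia); rewrite ger0_norm ?exprn_ge0 ?invr_ge0 //.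
rewrite exprVn ltr_pdivlMr ?ltr_wpDl // => lt_e.
apply: le_lt_trans (s_le k ltac:(lia)) (le_lt_trans _ lt_e).
rewrite mulrC ler_wpM2l ?invr_ge0 ?exprn_ge0 //.
by rewrite (le_trans (ler_norm c)) // lerDl.
Qed.

Section BasinSets.
Variable R : realType.
Local Notation C := (cpx R).
Variables (Rad : option R) (p : C -> C) (q : C -> C -> C).
Local Notation f := (skew_map p q).

Lemma iter_skew_map_fst j (u : C * C) : (iter j f u).1 = iter j p u.1.
Proof. by elim: j => //= j ->. Qed.

Lemma Alplus_sub_basin0_Ez (sig tau r l : R) :
  (forall y, cabs y.1 < sig -> cabs y.2 <= tau -> forall j,
    [/\ cabs (iter j f y).1 <= cabs y.1 / 2 ^+ j, cabs (iter j f y).2 <= tau / 2 ^+ j &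
        y.1 != 0 -> (iter j f y).1 != 0]) ->
  p 0 = 0 -> sig <= 1 -> 0 < l -> r <= sig -> r <= tau ->
  (forall z, cabs z < r -> disk Rad z) ->
  Alplus Rad f r l `<=` basin0 Rad f `\` Ez Rad f.
Proof.
move=> trap p0 sig_le1 l_gt0 r_sig r_tau r_disk x [n0 _ [dom_n0 [y1_lt y2_lt]]].
set y := iter n0 f x in y1_lt y2_lt.
have y1_neq0 : y.1 != 0.
  apply: contraTneq y2_lt => ->; rewrite cabs0 powR0 ?gt_eqF // mulr0 -leNgt.
  exact: cabs_ge0.
have y1_gt0 := cabs_gt0 y1_neq0.
have r_gt0 := lt_trans y1_gt0 y1_lt.
have y2_le : cabs y.2 <= tau.
  have : cabs y.1 `^ l <= 1.
    rewrite -[X in _ <= X](powRr0 (cabs y.1)); apply: ger_powR (ltW l_gt0).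
    by rewrite y1_gt0 (le_trans (ltW (lt_le_trans y1_lt r_sig))).
  move=> pow_le1; apply: le_trans (ltW y2_lt) (le_trans _ r_tau).
  by rewrite ler_piMr // ltW.
have orbit j := trap y (lt_le_trans y1_lt r_sig) y2_le j.
have shift k : (n0 <= k)%N -> iter k f x = iter (k - n0) f y.
  by move=> k_ge; rewrite /y -iterD subnK.
split; first split.
- move=> k; case: (leqP k n0) => [/dom_n0 //|/ltnW k_ge].
  rewrite /dom2 /= shift //; apply: r_disk; have [z_le _ _] := orbit (k - n0)%N.
  apply: le_lt_trans z_le (le_lt_trans _ y1_lt).
  by rewrite ler_pdivrMr ?exprn_gt0 // ler_peMr ?cabs_ge0 // exprn_ege1 // ler1n.
- apply/cvg_pairP; split.
    apply: (@cvg0_geometric_bound _ _ (cabs y.1) n0) => k k_ge.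
    by rewrite shift //; case: (orbit (k - n0)%N).
  apply: (@cvg0_geometric_bound _ _ tau n0) => k k_ge.
  by rewrite shift //; case: (orbit (k - n0)%N).
- move=> [N _ [_ zN0]].
  have [N_ge|N_lt] := leqP n0 N.
    by have [_ _ /(_ y1_neq0)] := orbit (N - n0)%N; rewrite -shift // zN0 eqxx.
  move: y1_neq0; rewrite /y -(subnK (ltnW N_lt)) iterD iter_skew_map_fst zN0.
  have iter_p0 j : iter j p 0 = 0 by elim: j => //= j ->.
  by rewrite iter_p0 eqxx.
Qed.

Lemma basin0_Ez_sub_Alplus (r l : R) :
  (forall x, (forall k, (iter k f x).1 != 0) ->
     (fun k => iter k f x) @ \oo --> (0 : C, 0 : C) -> exists k, Ulplus r l (iter k f x)) ->
  basin0 Rad f `\` Ez Rad f `<=` Alplus Rad f r l.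
Proof.
move=> enters x [[dom cvg0] notE].
have z_neq0 k : (iter k f x).1 != 0.
  by apply/eqP => zk; apply: notE; exists k => //; split=> // j _; apply: dom.
have [k Uk] := enters x z_neq0 cvg0.
by exists k => //; split=> // j _; apply: dom.
Qed.

End BasinSets.

Theorem theorem2p14 (R : realType) (Rad : option R)
    (p : cpx R -> cpx R) (q : cpx R -> cpx R -> cpx R)
    (a : cpx R) (delta : nat) (b : nat -> nat -> cpx R)
    (s : nat) (n m : nat -> nat) (k : nat) :
  (* domain: C^2 (Rad = None) or {|z| < Rad} x C with the basin of p at 0
     relatively compact in {|z| < Rad} *)
  (forall R0, Rad = Some R0 ->
     0 < R0 /\ rel_compact_in (basin1 (disk Rad) p) (disk Rad)) ->
  holo1 (disk Rad) p ->
  holo2 (dom2 Rad) q ->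
  (* p(z) = a z^delta + O(z^(delta+1)), a <> 0, delta >= 2 *)
  a != 0 -> (2 <= delta)%N ->
  (fun z => p z - a * z ^+ delta) =O_ (nbhs (0 : cpx R))
    (fun z => z ^+ delta.+1) ->
  (* q(z,w) = sum b_ij z^i w^j with b_00 = b_01 = 0 *)
  expansion2 q b -> b 0%N 0%N = 0 -> b 0%N 1%N = 0 ->
  (* vertices of the Newton polygon *)
  newton_vertices b s n m ->
  (* Case 4, with (gamma, d) = (n_k, m_k) *)
  (2 < s)%N -> (2 <= k)%N -> (k <= s.-1)%N ->
  T_intercept R n m k <= delta%:R <= T_intercept R n m k.-1 ->
  (n 1%N, m 1%N) != (0%N, delta) ->
  let alpha : R := (n k)%:R / (delta%:R - (m k)%:R) in
  exists2 r0 : R, 0 < r0 &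
    forall r l : R, 0 < r < r0 -> 0 < l < alpha ->
      Alplus Rad (skew_map p q) r l =
        basin0 Rad (skew_map p q) `\` Ez Rad (skew_map p q).
Proof.
move=> dom_R _ _ a_neq0 delta_ge2 p_near0 [eps eps_gt0 [[M coef] q_series]] b00 b01.
move=> NV s_gt2 k_ge2 k_le intercepts first_vertex alpha.
have [rho rho_gt0 p_bounds] := near0_dominant_bounds a_neq0 p_near0.
have p_low z z_lt := (andP (p_bounds z z_lt)).1.
have p0 := vanish_at0_of_power_bound (ltnW delta_ge2) rho_gt0
  (fun z z_lt => (andP (p_bounds z z_lt)).2).
have a_gt0 := cabs_gt0 a_neq0.
have M_ge0 : 0 <= M by have := coef 0%N; rewrite big_ord0.
have q_mono z w G := @expansion_monomial_bound _ _ _ _ _ eps_gt0 coef q_series z w G.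
have q_bound z w :=
  expansion_bound_no_constant_linear eps_gt0 coef q_series (z := z) (w := w) b00 b01.
have [sig [tau [/andP [sig_gt0 sig_le1] tau_gt0 trap]]] :=
  small_orbits_contract p_bounds q_bound a_gt0 rho_gt0 eps_gt0 M_ge0 delta_ge2.
have [Rb Rb_gt0 Rb_disk] := disk_contains_ball (fun R0 E => (dom_R R0 E).1).
exists (Num.min (Num.min sig tau) Rb) => [|r l /andP [r_gt0]].
  by rewrite !lt_min sig_gt0 tau_gt0.
rewrite !lt_min => /andP [/andP [r_sig r_tau] r_Rb] /andP [l_gt0 l_lt].
apply/seteqP; split.
  apply: Alplus_sub_basin0_Ez trap p0 sig_le1 l_gt0 (ltW r_sig) (ltW r_tau) _.
  by move=> z z_lt; apply/Rb_disk/(lt_trans z_lt).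
have [l_lt' l'_lt] := midf_lt l_lt.
have [mu mu_gt gap] := case4_weight_gap NV s_gt2 k_ge2 k_le intercepts first_vertex
  (introT andP (conj (lt_trans l_gt0 l_lt') l'_lt)).
apply: basin0_Ez_sub_Alplus => x.
apply: (orbit_enters_Ulplus p_low q_mono a_gt0 rho_gt0 eps_gt0 M_ge0 (l := l) _ r_gt0
  (ltnW delta_ge2) mu_gt gap).
by rewrite l_gt0 l_lt'.
Qed.
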